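(* Let $\varphi$ be a quantifier-free formula in the SMT theory of floating-point numbers and $\mathit{cost}$ a floating-point variable occurring in $\varphi$ with $n$ bits, and suppose $\varphi_{\mathrm{noNaN}}:=\varphi\wedge\neg\mathrm{isNaN}(\mathit{cost})$ is satisfiable; consider minimization (resp. maximization) of $\mathit{cost}$. Let $T$ be the attractor trajectory defined below. Then any model $\mathcal{M}$ of $\varphi_{\mathrm{noNaN}}$ which lexicographically maximizes $T$ with respect to $\varphi_{\mathrm{noNaN}}$ is an optimal solution of the problem, i.e. there is no model $\mathcal{M}'$ of $\varphi_{\mathrm{noNaN}}$ with $\mathcal{M}'(\mathit{cost})<\mathcal{M}(\mathit{cost})$ (resp. $\mathcal{M}'(\mathit{cost})>\mathcal{M}(\mathit{cost})$).
   Context: Bits of $\mathit{cost}$ are indexed from most significant $\mathit{cost}[0]$ (sign) to least significant $\mathit{cost}[n-1]$; $n=e+s$ where $e$ is the number of exponent bits and $s$ the number of significand bits including the hidden bit, with IEEE 754-2008 binary semantics: with bias $b=2^{e-1}-1$, exponent field $E$ all ones and significand $m=0$ gives $\pm\infty$, $E$ all ones and $m\neq0$ gives NaN, $E=0$ gives the subnormal $(-1)^\sigma2^{1-b}(0.m)_2$, otherwise the normal $(-1)^\sigma2^{E-b}(1.m)_2$. The order $\le,<$ is the usual total order on non-NaN floating-point values ($+0$ and $-0$ equal). For an assignment $\tau_k$ to the $k$ most significant bits of $\mathit{cost}$, the dynamic attractor $d_{\tau_k}$ is the smallest (resp. largest) non-NaN floating-point value whose $k$ most significant bits agree with $\tau_k$,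 and $A^{\tau_k}[i]:=(\mathit{cost}[i]=d_{\tau_k}[i])$. Inductively, $\tau_0=\emptyset$ and for $k\in[0..n-1]$, $\tau_{k+1}=\tau_k\cup\{\mathit{cost}[k]:=b_k\}$ where $b_k=\overline{d_{\tau_k}[k]}$ if $\varphi_{\mathrm{noNaN}}\wedge\tau_k\wedge A^{\tau_k}[k]$ is unsatisfiable and $b_k=d_{\tau_k}[k]$ otherwise. The attractor trajectory is $T=[A^{\tau_0}[0],\dots,A^{\tau_{n-1}}[n-1]]$. For an assignment $\mu$ to all bits of $\mathit{cost}$, $\mu|_k$ is its restriction to $\mathit{cost}[0..k-1]$; $\mu$ lexicographically maximizes $T$ with respect to $\varphi_{\mathrm{noNaN}}$ iff for every $k\in[0..n-1]$: $\mu[k]=\overline{d_{\tau_k}[k]}$ if $\varphi_{\mathrm{noNaN}}\wedge\mu|_k\wedge T[k]$ is unsatisfiable, and $\mu[k]=d_{\tau_k}[k]$ otherwise. A model lexicographically maximizes $T$ iff its restriction to the bits of $\mathit{cost}$ does. *)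

From mathcomp Require Import all_boot all_order all_algebra.
Set Implicit Arguments. Unset Strict Implicit. Unset Printing Implicit Defensive.
Import Order.TTheory GRing.Theory Num.Theory.
Local Open Scope ring_scope.

(* Values of IEEE 754-2008 binary floating-point numbers: NaN, -oo, +oo,
   or a finite rational value (with +0 and -0 both mapped to 0). *)
Inductive fpval := FNaN | FNInf | FPInf | FFin of rat.

Definition bits2nat (l : seq bool) : nat :=
  foldl (fun acc (b : bool) => (2 * acc + b)%N) 0%N l.

Definition bias (e : nat) : int := (2 ^ e.-1)%N%:Z - 1.

(* Decoding of a bit vector cost[0..n-1] (n = e + s, cost[0] = sign,
   cost[1..e] = exponent field, cost[e+1..n-1] = trailing significand m). *)
Definition fpvalue (e s : nat) (t : seq bool) : fpval :=
  let sg := head false t in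
  let E := bits2nat (take e (behead t)) in
  let m := bits2nat (drop e.+1 t) in
  let sgn : rat := if sg then -1 else 1 in
  let frac : rat := (m%:R / (2 ^ s.-1)%N%:R) in
  if E == (2 ^ e).-1 then
    (if m == 0%N then (if sg then FNInf else FPInf) else FNaN)
  else if E == 0%N then FFin (sgn * (2%:R ^ (1 - bias e)) * frac)
  else FFin (sgn * (2%:R ^ (E%:Z - bias e)) * (1 + frac)).

Definition isNaN (e s : nat) (t : seq bool) : bool :=
  if fpvalue e s t is FNaN then true else false.

Definition fp_le (x y : fpval) : bool :=
  match x, y with
  | FNaN, _ | _, FNaN => false
  | FNInf, _ => true
  | _, FPInf => true
  | FFin a, FFin b => a <= b
  | _, _ => false
  end.

Definition fp_lt (x y : fpval) : bool := fp_le x y && ~~ fp_le y x.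

Definition better (minimize : bool) (x y : fpval) : bool :=
  if minimize then fp_lt x y else fp_lt y x.

Section Attractor.
Variables (e s : nat) (Model : Type) (phi : Model -> Prop)
          (cost : Model -> (e + s).-tuple bool) (minimize : bool).

Definition is_attractor (tau : seq bool) (d : (e + s).-tuple bool) : Prop :=
  ~~ isNaN e s d /\ take (size tau) d = tau /\
  forall v : (e + s).-tuple bool, ~~ isNaN e s v -> take (size tau) v = tau ->
    if minimize then fp_le (fpvalue e s d) (fpvalue e s v)
    else fp_le (fpvalue e s v) (fpvalue e s d).

Definition sat_with (tau : seq bool) (k : nat) (b : bool) : Prop :=
  exists M, phi M /\ ~~ isNaN e s (cost M) /\
    take (size tau) (cost M) = tau /\ nth false (cost M) k = b.

Fixpoint tau_rel (k : nat) (tau : seq bool) : Prop :=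
  match k with
  | 0%N => tau = [::]
  | k'.+1 => exists tau' (d : (e + s).-tuple bool),
      tau_rel k' tau' /\ is_attractor tau' d /\
      ((~ sat_with tau' k' (nth false d k') -> tau = rcons tau' (~~ nth false d k')) /\
       (sat_with tau' k' (nth false d k') -> tau = rcons tau' (nth false d k')))
  end.

(* mu lexicographically maximizes the attractor trajectory T
   w.r.t. phi_noNaN; T[k] is (cost[k] = d_{tau_k}[k]). *)
Definition lex_max_traj (mu : (e + s).-tuple bool) : Prop :=
  forall k, (k < e + s)%N ->
  forall tau (d : (e + s).-tuple bool), tau_rel k tau -> is_attractor tau d ->
    (~ sat_with (take k mu) k (nth false d k) -> nth false mu k = ~~ nth false d k) /\
    (sat_with (take k mu) k (nth false d k) -> nth false mu k = nth false d k).

End Attractor.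

From mathcomp Require Import all_boot all_order all_algebra.
From mathcomp Require Import zify ring lra.
Set Implicit Arguments. Unset Strict Implicit. Unset Printing Implicit Defensive.
Import Order.TTheory GRing.Theory Num.Theory.

(* Read a non-NaN encoding as a sign-magnitude integer, offset by 2^(e+s):
   [fpkey] is then an order embedding of the floating-point order into nat, under
   which +0 and -0 get the same key.  Suppose cost M' beats cost M, and let k be
   the first bit where they differ, d the attractor of the common k-prefix.  If
   cost M disagreed with d at bit k, cost M' would agree with it, witnessing that
   T[k] is satisfiable; by lexicographic maximality cost M agrees with d at bit k.
   For k > 0 all encodings with this prefix have the same sign, so the first
   differing bit decides the key order: cost M and d lie on the same side of
   cost M', and d is optimal among the encodings with the prefix.  For k = 0, d is
   the global optimum -oo (resp. +oo), so cost M has the optimal sign. *)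

Lemma exists_first_diff (T : eqType) (x0 : T) (a b : seq T) : size a = size b -> a != b ->
  exists k, [/\ (k < size a)%N, take k a = take k b & nth x0 a k != nth x0 b k].
Proof.
elim: a b => [|x a IH] [|y b] //= [size_ab]; rewrite eqseq_cons.
have [<- /= neq_ab|neq_xy _] := eqVneq x y; last by exists 0%N.
by have [k [lt_k take_ab neq_k]] := IH b size_ab neq_ab; exists k.+1; rewrite /= take_ab.
Qed.

Lemma head_take k (t : seq bool) : (0 < k)%N -> head false (take k t) = head false t.
Proof. by case: k => // k; case: t. Qed.

Lemma size_take_tuple (T : Type) n k (t : n.-tuple T) : (k <= n)%N -> size (take k t) = k.
Proof. by move=> le_k; rewrite size_takel // size_tuple. Qed.

Lemma foldl_bits acc l :
  foldl (fun acc (b : bool) => (2 * acc + b)%N) acc l = (acc * 2 ^ size l + bits2nat l)%N.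
Proof.
elim: l acc => [|b l IH] acc /=; first by rewrite /bits2nat /= muln1 addn0.
by rewrite /bits2nat /= IH [in RHS]IH expnS; nia.
Qed.

Lemma bits2nat_cat a b : bits2nat (a ++ b) = (bits2nat a * 2 ^ size b + bits2nat b)%N.
Proof. by rewrite {1}/bits2nat foldl_cat foldl_bits. Qed.

Lemma bits2nat_cons x l : bits2nat (x :: l) = (x * 2 ^ size l + bits2nat l)%N.
Proof. by rewrite -cat1s bits2nat_cat /bits2nat /=. Qed.

Lemma bits2nat_lt l : (bits2nat l < 2 ^ size l)%N.
Proof. by elim: l => [|x l IH] //=; rewrite bits2nat_cons expnS; case: x => /=; lia. Qed.

Lemma bits2nat_nseq j (b : bool) : bits2nat (nseq j b) = if b then (2 ^ j).-1 else 0%N.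
Proof.
elim: j => [|j IH]; first by case: b.
rewrite /= bits2nat_cons size_nseq IH expnS.
have := expn_gt0 2 j; case: (b); lia.
Qed.

Lemma bits2nat_lt_first_diff a b j : size a = size b -> (j < size a)%N ->
  take j a = take j b -> nth false a j != nth false b j ->
  (bits2nat a < bits2nat b) = nth false b j.
Proof.
move=> size_ab lt_ja take_ab; have lt_jb : (j < size b)%N by rewrite -size_ab.
rewrite -[in bits2nat a](cat_take_drop j.+1 a) -[in bits2nat b](cat_take_drop j.+1 b).
rewrite !bits2nat_cat (take_nth false lt_ja) (take_nth false lt_jb) -!cats1 !bits2nat_cat.
rewrite take_ab !size_drop -size_ab.
have := bits2nat_lt (drop j.+1 a); have := bits2nat_lt (drop j.+1 b).
rewrite !size_drop -size_ab /bits2nat /=.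
by case: (nth false a j); case: (nth false b j) => //= *; nia.
Qed.

Local Open Scope ring_scope.

Definition fneg (x : fpval) : fpval :=
  match x with FNaN => FNaN | FNInf => FPInf | FPInf => FNInf | FFin a => FFin (- a) end.

Lemma fp_le_refl x : x <> FNaN -> fp_le x x.
Proof. by case: x => //= q _; rewrite lexx. Qed.

Lemma fp_lt_fin a b : fp_lt (FFin a) (FFin b) = (a < b).
Proof. by rewrite /fp_lt /= -ltNge andb_idl // => /ltW. Qed.

Lemma fp_le_fneg x y : fp_le (fneg x) (fneg y) = fp_le y x.
Proof. by case: x => [|||q]; case: y => [|||r] //=; rewrite lerN2. Qed.

Lemma fp_le_fneg_l x y : fp_le (FFin 0) x -> fp_le (FFin 0) y -> fp_le (fneg x) y.
Proof. case: x => [|||q]; case: y => [|||r] //= hq hr; lra. Qed.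

Lemma fp_le_fneg_r x y : fp_le (FFin 0) x -> fp_le (FFin 0) y ->
  fp_le x (fneg y) = fp_le x (FFin 0) && fp_le y (FFin 0).
Proof.
case: x => [|||q]; case: y => [|||r] //= hq hr; rewrite ?andbF //.
by apply/idP/andP => [?|[? ?]]; [split|]; lra.
Qed.

(* A finite nonnegative value in multiples of the least positive subnormal
   2^(1-b) / P, where P = 2^(s-1). *)
Definition subnormal_units (P E m : nat) : nat :=
  if E == 0%N then m else (2 ^ E.-1 * (P + m))%N.

Lemma subnormal_units_mono P N1 N2 : (0 < P)%N -> (N1 < N2)%N ->
  (subnormal_units P (N1 %/ P) (N1 %% P) < subnormal_units P (N2 %/ P) (N2 %% P))%N.
Proof.
move=> P_gt0 lt12.
have e1 := divn_eq N1 P; have e2 := divn_eq N2 P.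
have m1 := ltn_pmod N1 P_gt0; have m2 := ltn_pmod N2 P_gt0.
set E1 := (N1 %/ P)%N in e1 *; set E2 := (N2 %/ P)%N in e2 *.
set a := (N1 %% P)%N in e1 m1 *; set b := (N2 %% P)%N in e2 m2 *.
have le12 : (E1 <= E2)%N by apply/leq_div2r/ltnW.
rewrite /subnormal_units; case: (ltngtP E1 E2) le12 => // [lt_E _|eq_E _].
- have lt1 : ((if E1 == 0%N then a else 2 ^ E1.-1 * (P + a)) < 2 ^ E1 * P)%N.
    have [->|] := eqVneq E1 0%N; first by rewrite expn0 mul1n.
    by case: E1 {lt_E e1} => // E1 _ /=; rewrite expnS; nia.
  apply: (leq_trans lt1); case: E2 lt_E {e2} => // E2 lt_E /=.
  have : (2 ^ E1 <= 2 ^ E2)%N by rewrite leq_exp2l.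
  nia.
- rewrite eq_E in e1 *; have ab : (a < b)%N by nia.
  by case: eqP => // _; rewrite ltn_mul2l expn_gt0 /=; lia.
Qed.

Section PositiveValue.
Variables e s : nat.
Local Notation P := (2 ^ s.-1)%N.

Definition pos_value_fields (E m : nat) : fpval :=
  let frac : rat := m%:R / P%:R in
  if E == (2 ^ e).-1 then (if m == 0%N then FPInf else FNaN)
  else if E == 0%N then FFin (2%:R ^ (1 - bias e) * frac)
  else FFin (2%:R ^ (E%:Z - bias e) * (1 + frac)).

(* [N] is the integer read off the e+s-1 bits after the sign bit. *)
Definition pos_value (N : nat) : fpval := pos_value_fields (N %/ P) (N %% P).

Lemma fpvalue_signE t : (0 < s)%N -> size t = (e + s)%N ->
  fpvalue e s t = (if head false t then fneg else id) (pos_value (bits2nat (behead t))).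
Proof.
move=> s_gt0 size_t; have bits_behead : bits2nat (behead t) =
   (bits2nat (take e (behead t)) * P + bits2nat (drop e.+1 t))%N.
  rewrite -{1}(cat_take_drop e (behead t)) bits2nat_cat size_drop size_behead size_t.
  by case: t size_t => //= x r _; congr (_ * 2 ^ _ + _)%N; lia.
have lt_m := bits2nat_lt (drop e.+1 t).
rewrite size_drop size_t (_ : (e + s - e.+1 = s.-1)%N) in lt_m; last by lia.
rewrite /pos_value bits_behead divnMDl ?expn_gt0 // modnMDl divn_small // modn_small // addn0.
rewrite /fpvalue /pos_value_fields; case: (head false t) => /=.
  by do 2 (case: ifP => _ //=); rewrite ?mulN1r ?mulNr.
by do 2 (case: ifP => _ //=); rewrite ?mul1r.
Qed.

Lemma pos_value_fieldsE E m : E != (2 ^ e).-1 ->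
  pos_value_fields E m = FFin (2%:R ^ (1 - bias e) / P%:R * (subnormal_units P E m)%:R).
Proof.
move=> /negbTE E_fin; rewrite /pos_value_fields E_fin /subnormal_units.
have P_neq0 : P%:R != 0 :> rat by rewrite pnatr_eq0 -lt0n expn_gt0.
case: eqP => [_|/eqP E_neq0]; first by congr FFin; field.
have -> : E%:Z - bias e = (1 - bias e) + (E.-1)%:Z.
  by case: E E_neq0 E_fin => // E _ _ /=; rewrite -addn1 PoszD; ring.
by rewrite expfzDr // natrM natrD -exprnP -natrX; congr FFin; field.
Qed.

Lemma pos_value_lt N1 N2 : (N1 < N2)%N -> (N2 < 2 ^ e * P)%N ->
  pos_value N2 <> FNaN -> fp_lt (pos_value N1) (pos_value N2).
Proof.
move=> lt12 N2_lt; rewrite /pos_value.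
have P_gt0 : (0 < P)%N by rewrite expn_gt0.
have e1 := divn_eq N1 P; have e2 := divn_eq N2 P.
have E2_lt : (N2 %/ P < 2 ^ e)%N by rewrite ltn_divLR // mulnC.
have le12 : (N1 %/ P <= N2 %/ P)%N by apply/leq_div2r/ltnW.
have := expn_gt0 2 e.
have [E2_inf|E2_fin] := eqVneq (N2 %/ P)%N (2 ^ e).-1.
  rewrite [pos_value_fields (N2 %/ P) _]/pos_value_fields E2_inf eqxx.
  have [m2_0 _ _|] := eqVneq (N2 %% P)%N 0%N; last by [].
  rewrite pos_value_fieldsE //.
  by apply/eqP => E1_inf; move: lt12; rewrite e1 e2 E1_inf E2_inf m2_0; lia.
move=> _ _; rewrite !pos_value_fieldsE //; last by lia.
rewrite fp_lt_fin ltr_pM2l ?ltr_nat ?subnormal_units_mono //.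
by rewrite divr_gt0 ?exprz_gt0 // ltr0n.
Qed.

Lemma pos_value_le a b : (a < 2 ^ e * P)%N -> (b < 2 ^ e * P)%N ->
  pos_value a <> FNaN -> pos_value b <> FNaN ->
  fp_le (pos_value a) (pos_value b) = (a <= b)%N.
Proof.
move=> a_lt b_lt a_num b_num; case: (ltngtP a b) => [lt_ab|lt_ba|->].
- by case/andP: (pos_value_lt lt_ab b_lt b_num).
- by case/andP: (pos_value_lt lt_ba a_lt a_num) => _ /negbTE.
- exact: fp_le_refl.
Qed.

Lemma pos_value0 : (0 < e)%N -> pos_value 0 = FFin 0.
Proof.
move=> e_gt0; rewrite /pos_value div0n mod0n pos_value_fieldsE /= ?mulr0 //.
by rewrite eq_sym -lt0n -ltnS prednK ?expn_gt0 // -{1}(expn0 2) ltn_exp2l.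
Qed.

End PositiveValue.


Section FpKey.
Variables e s : nat.
Local Notation n := (e + s)%N.

Definition fpkey (t : seq bool) : nat :=
  if head false t then (2 ^ n - bits2nat (behead t))%N else (2 ^ n + bits2nat (behead t))%N.

Lemma fpkey_sign t u : head false t -> ~~ head false u -> (fpkey t <= fpkey u)%N.
Proof. by rewrite /fpkey => -> /negbTE ->; lia. Qed.

Lemma fpkey_lt_first_diff a c k : size a = n -> size c = n -> (0 < k < n)%N ->
  take k a = take k c -> nth false a k != nth false c k ->
  (fpkey a < fpkey c)%N = (nth false c k != head false c).
Proof.
case: a => [|x a] /=; first by move=> ? ? /andP[]; lia.
case: c => [|z c] /=; first by move=> ? ? /andP[]; lia.
case: k => [|k] //= size_a size_c lt_k [<- take_ac] neq_k.
have size_ac : size a = size c by lia.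
have lt_ka : (k < size a)%N by lia.
have lt_kc : (k < size c)%N by rewrite -size_ac.
have := bits2nat_lt_first_diff size_ac lt_ka take_ac neq_k.
have := bits2nat_lt_first_diff (esym size_ac) lt_kc (esym take_ac).
rewrite eq_sym => /(_ neq_k).
have lt_a : (2 ^ size a <= 2 ^ n)%N by rewrite leq_exp2l //; lia.
have := bits2nat_lt a; have := bits2nat_lt c; rewrite /fpkey /= -size_ac.
by case: (nth false a k) neq_k; case: (nth false c k); case: x => //= *; apply/idP/idP; lia.
Qed.

Lemma fpkey_same_side a b c k : size a = n -> size b = n -> size c = n -> (0 < k < n)%N ->
  take k a = take k c -> take k b = take k c ->
  nth false a k = nth false b k -> nth false a k != nth false c k ->
  (fpkey a < fpkey c)%N = (fpkey b < fpkey c)%N /\ (fpkey c < fpkey a)%N = (fpkey c < fpkey b)%N.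
Proof.
move=> size_a size_b size_c /andP[k_gt0 lt_k] take_a take_b eq_ab neq_ac.
have neq_bc : nth false b k != nth false c k by rewrite -eq_ab.
have head_ab : head false a = head false b.
  by rewrite -(head_take a k_gt0) -(head_take b k_gt0) take_a take_b.
by rewrite !(fpkey_lt_first_diff _ _ (k := k)) ?k_gt0 ?eq_ab ?head_ab // eq_sym.
Qed.

Hypotheses (e_gt0 : (0 < e)%N) (s_gt0 : (0 < s)%N).

Lemma bits2nat_behead_lt t : size t = n -> (bits2nat (behead t) < 2 ^ e * 2 ^ s.-1)%N.
Proof.
move=> size_t; have := bits2nat_lt (behead t); rewrite size_behead size_t -expnD.
by rewrite (_ : ((e + s).-1 = e + s.-1)%N) //; lia.
Qed.

Lemma pos_value_behead_num t : size t = n -> ~~ isNaN e s t ->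
  pos_value e s (bits2nat (behead t)) <> FNaN.
Proof.
by move=> size_t; rewrite /isNaN fpvalue_signE //; case: (head false t); case: pos_value.
Qed.

Lemma fp_le_fpkey t u : size t = n -> size u = n -> ~~ isNaN e s t -> ~~ isNaN e s u ->
  fp_le (fpvalue e s t) (fpvalue e s u) = (fpkey t <= fpkey u)%N.
Proof.
move=> size_t size_u t_num u_num.
have := bits2nat_behead_lt size_t; have := bits2nat_behead_lt size_u.
have := pos_value_behead_num size_t t_num; have := pos_value_behead_num size_u u_num.
rewrite !fpvalue_signE // /fpkey.
move: (bits2nat (behead t)) (bits2nat (behead u)) => a b b_num a_num b_lt a_lt.
have lt_n : (2 ^ e * 2 ^ s.-1 < 2 ^ n)%N by rewrite -expnD ltn_exp2l; lia.
have pv0 := pos_value0 s e_gt0.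
have num0 : pos_value e s 0 <> FNaN by rewrite pv0.
have lt0 : (0 < 2 ^ e * 2 ^ s.-1)%N by rewrite muln_gt0 !expn_gt0.
have nonneg x : (x < 2 ^ e * 2 ^ s.-1)%N -> pos_value e s x <> FNaN ->
    fp_le (FFin 0) (pos_value e s x).
  by move=> x_lt x_num; rewrite -pv0 pos_value_le.
case: (head false t); case: (head false u) => /=.
- by rewrite fp_le_fneg pos_value_le //; apply/idP/idP; lia.
- by rewrite fp_le_fneg_l ?nonneg //; apply/esym/idP; lia.
- rewrite fp_le_fneg_r ?nonneg // -pv0 !pos_value_le //.
  by apply/andP/idP => [[]|]; [|split]; lia.
- by rewrite pos_value_le //; apply/idP/idP; lia.
Qed.

Lemma fp_lt_fpkey t u : size t = n -> size u = n -> ~~ isNaN e s t -> ~~ isNaN e s u ->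
  fp_lt (fpvalue e s t) (fpvalue e s u) = (fpkey t < fpkey u)%N.
Proof.
by move=> *; rewrite /fp_lt !fp_le_fpkey // -ltnNge andb_idl // => /ltnW.
Qed.

Lemma better_fpkey minimize t u : size t = n -> size u = n ->
  ~~ isNaN e s t -> ~~ isNaN e s u ->
  better minimize (fpvalue e s t) (fpvalue e s u) =
  (if minimize then fpkey t < fpkey u else fpkey u < fpkey t)%N.
Proof. by move=> *; rewrite /better !fp_lt_fpkey. Qed.

End FpKey.


Lemma fpvalue_infinity e s (neg : bool) :
  fpvalue e s (neg :: nseq e true ++ nseq s.-1 false) = if neg then FNInf else FPInf.
Proof.
rewrite /fpvalue /= take_size_cat ?size_nseq // drop_size_cat ?size_nseq //.
by rewrite !bits2nat_nseq !eqxx.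
Qed.

Lemma head_infinite e s t (neg : bool) :
  fpvalue e s t = (if neg then FNInf else FPInf) -> head false t = neg.
Proof. by rewrite /fpvalue; case: (head false t); case: neg; do 2 case: ifP. Qed.


Section Attractor.
Variables (e s : nat) (Model : Type) (phi : Model -> Prop)
          (cost : Model -> (e + s).-tuple bool) (minimize : bool).
Hypotheses (e_gt0 : (0 < e)%N) (s_gt0 : (0 < s)%N).
Local Notation n := (e + s)%N.
Local Notation fpkey := (fpkey e s).

Lemma attractor_fpkey tau (d v : n.-tuple bool) : is_attractor minimize tau d ->
  ~~ isNaN e s v -> take (size tau) v = tau ->
  if minimize then (fpkey d <= fpkey v)%N else (fpkey v <= fpkey d)%N.
Proof.
case=> d_num [_ d_ext] v_num v_tau.
by have := d_ext v v_num v_tau; rewrite !fp_le_fpkey ?size_tuple.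
Qed.

Lemma attractor_exists k (mu : n.-tuple bool) : ~~ isNaN e s mu -> (k <= n)%N ->
  exists d : n.-tuple bool, is_attractor minimize (take k mu) d.
Proof.
move=> mu_num le_k.
pose P (v : n.-tuple bool) := ~~ isNaN e s v && (take k v == take k mu).
have P_mu : P mu by rewrite /P mu_num eqxx.
have attractorP (d : n.-tuple bool) : P d ->
    (forall v : n.-tuple bool, P v ->
       if minimize then (fpkey d <= fpkey v)%N else (fpkey v <= fpkey d)%N) ->
    is_attractor minimize (take k mu) d.
  rewrite /is_attractor size_take_tuple // => /andP[d_num /eqP d_tau] d_ext.
  split=> //; split=> // v v_num v_tau; rewrite !fp_le_fpkey ?size_tuple //.
  by apply: d_ext; rewrite /P v_num v_tau eqxx.
case: minimize attractorP => attractorP.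
- case: (arg_minnP (fun v : n.-tuple bool => fpkey v) P_mu) => d P_d d_min.
  by exists d; apply: attractorP.
- case: (arg_maxnP (fun v : n.-tuple bool => fpkey v) P_mu) => d P_d d_max.
  by exists d; apply: attractorP.
Qed.

Lemma attractor_nil_sign (d : n.-tuple bool) :
  is_attractor minimize [::] d -> head false d = minimize.
Proof.
case=> d_num [_ d_ext]; apply: (@head_infinite e s).
have size_inf : size (minimize :: nseq e true ++ nseq s.-1 false) == n.
  by rewrite /= size_cat !size_nseq; apply/eqP; lia.
have := d_ext (Tuple size_inf); rewrite /isNaN /= fpvalue_infinity => /(_ _ erefl).
by move: d_num; rewrite /isNaN; case: (minimize); case: (fpvalue e s d) => [|||q] //= _ /(_ isT).
Qed.

Lemma tau_rel_take (mu : n.-tuple bool) : ~~ isNaN e s mu ->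
  lex_max_traj phi cost minimize mu ->
  forall k, (k <= n)%N -> tau_rel phi cost minimize k (take k mu).
Proof.
move=> mu_num mu_lex; elim=> [|k IH] lt_k /=; first by rewrite take0.
have tau_k := IH (ltnW lt_k).
have [d att_d] := attractor_exists mu_num (ltnW lt_k).
exists (take k mu), d; split; first exact: tau_k.
split; first exact: att_d.
have [unsat sat] := mu_lex k lt_k _ d tau_k att_d.
rewrite (take_nth false); last by rewrite size_tuple.
by split=> [/unsat|/sat] ->.
Qed.

Lemma lex_max_traj_agrees_attractor (mu d : n.-tuple bool) (M' : Model) k :
  lex_max_traj phi cost minimize mu -> (k < n)%N ->
  tau_rel phi cost minimize k (take k mu) -> is_attractor minimize (take k mu) d ->
  phi M' -> ~~ isNaN e s (cost M') ->
  take k (cost M') = take k mu -> nth false (cost M') k != nth false mu k ->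
  nth false mu k = nth false d k.
Proof.
move=> mu_lex lt_k tau_k att_d phi_M' M'_num take_M' neq_k.
have [//|neq_mu_d] := eqVneq (nth false mu k) (nth false d k).
have [_ sat] := mu_lex k lt_k _ d tau_k att_d; apply: sat.
exists M'; split; first exact: phi_M'.
split; first exact: M'_num.
split; first by rewrite size_take_tuple ?(ltnW lt_k).
move: neq_k neq_mu_d.
by case: (nth false d k); case: (nth false mu k); case: (nth false (cost M') k).
Qed.

Lemma attractor_first_diff_not_better (mu nu d : n.-tuple bool) k :
  ~~ isNaN e s mu -> ~~ isNaN e s nu -> (k < n)%N ->
  take k nu = take k mu -> nth false nu k != nth false mu k ->
  is_attractor minimize (take k mu) d -> nth false mu k = nth false d k ->
  ~~ better minimize (fpvalue e s nu) (fpvalue e s mu).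
Proof.
move=> mu_num nu_num lt_k take_nu neq_k att_d mu_d.
rewrite better_fpkey ?size_tuple //.
have size_k := size_take_tuple mu (ltnW lt_k).
case: k => [|k] in lt_k take_nu neq_k att_d mu_d size_k *.
  rewrite take0 in att_d; rewrite !nth0 in neq_k mu_d.
  have := attractor_nil_sign att_d; rewrite -mu_d => mu_sign.
  have nu_sign : head false nu = ~~ minimize.
    by move: neq_k; rewrite mu_sign; case: (head false nu); case: (minimize).
  case: (minimize) mu_sign nu_sign => mu_sign nu_sign;
    by rewrite -leqNgt fpkey_sign ?mu_sign ?nu_sign.
have [_ [take_d _]] := att_d; rewrite size_k in take_d.
have [lt_side gt_side] : (fpkey mu < fpkey nu)%N = (fpkey d < fpkey nu)%N /\
                         (fpkey nu < fpkey mu)%N = (fpkey nu < fpkey d)%N.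
  by apply: (fpkey_same_side (k := k.+1)); rewrite ?size_tuple ?take_d // eq_sym.
have nu_prefix : take (size (take k.+1 mu)) nu = take k.+1 mu by rewrite size_k.
have := attractor_fpkey att_d nu_num nu_prefix.
by case: (minimize); rewrite ?lt_side ?gt_side -leqNgt.
Qed.

End Attractor.

Theorem theorem2 (e s : nat) (he : (1 < e)%N) (hs : (1 < s)%N)
  (Model : Type) (phi : Model -> Prop) (cost : Model -> (e + s).-tuple bool)
  (minimize : bool)
  (Hsat : exists M, phi M /\ ~~ isNaN e s (cost M))
  (M : Model) (HM : phi M) (HMnan : ~~ isNaN e s (cost M))
  (Hlex : lex_max_traj phi cost minimize (cost M)) :
  ~ (exists M' : Model, phi M' /\ ~~ isNaN e s (cost M') /\
       better minimize (fpvalue e s (cost M')) (fpvalue e s (cost M))).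
Proof.
have [e_gt0 s_gt0] := (ltnW he, ltnW hs).
case=> M' [phi_M' [nu_num nu_better]].
set mu := cost M in HMnan Hlex nu_better; set nu := cost M' in nu_num nu_better.
have nu_neq_mu : nu != mu :> seq bool.
  by apply: contraTneq nu_better => ->; rewrite /better /fp_lt !andbN if_same.
have [k [lt_k take_nu neq_k]] :=
  exists_first_diff false (etrans (size_tuple nu) (esym (size_tuple mu))) nu_neq_mu.
rewrite size_tuple in lt_k.
have [d att_d] := attractor_exists minimize e_gt0 s_gt0 HMnan (ltnW lt_k).
have tau_k := tau_rel_take e_gt0 s_gt0 HMnan Hlex (ltnW lt_k).
have mu_d := lex_max_traj_agrees_attractor Hlex lt_k tau_k att_d phi_M' nu_num take_nu neq_k.
apply/negP: nu_better.
exact: (attractor_first_diff_not_better e_gt0 s_gt0 HMnan nu_num lt_k take_nu neq_k att_d mu_d).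
Qed.
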